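(* Let $\mathbf{w}\in\Sigma^\omega$ be an infinite word with appearance constant $\mathbf{A}_\mathbf{w}<\infty$, and let $S\subseteq\mathbb{N}$ be the greedy string attractor for $\mathbf{w}$. Then for all $n\ge0$, $S\cap[0..n-1]$ is a string attractor for $\mathbf{w}[0..n-1]$, and its size is $O(\mathbf{A}_\mathbf{w}\log n)$ (with an absolute implied constant).
   Context: $\Sigma$ is a finite alphabet; words are indexed from $0$ and $[a..b]=\{a,\ldots,b\}$. The appearance constant $\mathbf{A}_\mathbf{w}$ is the least constant $C$ such that for every $m\ge1$, every length-$m$ factor of $\mathbf{w}$ has an occurrence in the prefix of length at most $Cm$. For a set $T\subseteq\mathbb{N}$ and $j\ge0$, say $T$ is a string attractor for $\mathbf{w}[0..j]$ if every nonempty factor of $\mathbf{w}[0..j]$ has an occurrence $\mathbf{w}[p..q]$ with $q\le j$ and $p\le t\le q$ for some $t\in T$. The greedy string attractor of $\mathbf{w}$ is $S=\bigcup_{m}S_m$ where $S_0=\emptyset$ and, for $m\ge0$, $S_{m+1}=S_m\cup\{j\}$ with $j$ the smallest integer such that $S_m$ is not a string attractor for $\mathbf{w}[0..j]$ (and $S_{m+1}=S_m$ if no such $j$ exists). *)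

From Stdlib Require Import Reals Lra Lia Arith List ClassicalEpsilon.
Open Scope R_scope.

Definition finite_alphabet (Sigma : Type) : Prop :=
  exists l : list Sigma, forall a : Sigma, In a l.

(* T is a string attractor for the prefix of length n of w, i.e. for
   w[0..n-1] (so "string attractor for w[0..j]" is the case n = j+1):
   every nonempty factor w[p..q] (q <= n-1) has an occurrence w[p'..q']
   with q' <= n-1 and some t in T with p' <= t <= q'. *)
Definition string_attractor {Sigma : Type} (w : nat -> Sigma)
    (T : nat -> Prop) (n : nat) : Prop :=
  forall p q : nat, (p <= q)%nat -> (q < n)%nat ->
    exists p' : nat,
      (p' + (q - p) < n)%nat /\
      (forall k : nat, (k <= q - p)%nat -> w (p' + k)%nat = w (p + k)%nat) /\
      exists t : nat, T t /\ (p' <= t)%nat /\ (t <= p' + (q - p))%nat.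

Definition appearance_bound {Sigma : Type} (w : nat -> Sigma) (C : R) : Prop :=
  forall m p : nat, (1 <= m)%nat ->
    exists p' : nat,
      INR (p' + m) <= C * INR m /\
      (forall k : nat, (k < m)%nat -> w (p' + k)%nat = w (p + k)%nat).

(* A is the appearance constant A_w (the least admissible bound);
   its existence expresses A_w < infinity. *)
Definition appearance_constant {Sigma : Type} (w : nat -> Sigma) (A : R) : Prop :=
  appearance_bound w A /\ (forall C : R, appearance_bound w C -> A <= C).

Definition bad {Sigma : Type} (w : nat -> Sigma) (T : nat -> Prop) (j : nat) : Prop :=
  ~ string_attractor w T (S j).

(* Smallest j such that T is not a string attractor for w[0..j]
   (meaningful only when such j exists). *)
Definition least_bad {Sigma : Type} (w : nat -> Sigma) (T : nat -> Prop) : nat :=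
  epsilon (inhabits 0%nat)
    (fun j => bad w T j /\ forall i : nat, (i < j)%nat -> ~ bad w T i).

Definition greedy_step {Sigma : Type} (w : nat -> Sigma) (T : nat -> Prop)
    : nat -> Prop :=
  fun x => T x \/ ((exists j : nat, bad w T j) /\ x = least_bad w T).

Fixpoint greedy_stage {Sigma : Type} (w : nat -> Sigma) (m : nat) : nat -> Prop :=
  match m with
  | O => fun _ => False
  | S m' => greedy_step w (greedy_stage w m')
  end.

Definition greedy_attractor {Sigma : Type} (w : nat -> Sigma) : nat -> Prop :=
  fun x => exists m : nat, greedy_stage w m x.

Definition pbool (P : Prop) : bool :=
  if excluded_middle_informative P then true else false.

Definition card_below (X : nat -> Prop) (n : nat) : nat :=
  length (filter (fun x => pbool (X x)) (seq 0 n)).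

From Stdlib Require Import Reals Lra Lia Arith List Classical ClassicalEpsilon.
Open Scope R_scope.

(** Suppose [j] is the least index at which the current greedy set
    [T] fails to be an attractor of [w[0..j]]. Some factor of [w[0..j]] has no
    occurrence crossing [T]; as [T] is an attractor of [w[0..j-1]], every
    occurrence of it ending before [j] would be covered, so it is a suffix
    [w[p..j]] whose first occurrence ends at [j], and [T] avoids [[p..j]]. The
    appearance bound gives [j + 1 <= A (j - p + 1)], i.e. every earlier greedy
    point [s] satisfies [s + 1 <= (1 - 1/A) (j + 1)]. Going down from the top,
    the greedy points below [n] thus shrink geometrically by the factor
    [1 - 1/A], so there are at most [1 + A ln n] of them. The truncation of the
    greedy attractor to [[0..n-1]] covers [w[0..n-1]] because points are added
    in increasing order and each addition pushes the least bad index up. *)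

Lemma ln_le x y : 0 < x -> x <= y -> ln x <= ln y.
Proof. intros Hx [Hlt | <-]; [left; apply ln_increasing | right]; auto. Qed.

Lemma ln_le_sub_1 x : 0 < x -> ln x <= x - 1.
Proof. intros Hx. pose proof (exp_ineq1_le (ln x)) as H. rewrite exp_ln in H; lra. Qed.

Lemma mul_ln_shrink A m : 0 < A -> 0 < m -> 0 < (1 - / A) * m ->
  A * ln ((1 - / A) * m) + 1 <= A * ln m.
Proof.
  intros HA Hm Hc.
  assert (Hpos : 0 < 1 - / A) by nra.
  rewrite ln_mult by assumption.
  assert (A * ln (1 - / A) <= A * ((1 - / A) - 1))
    by (apply Rmult_le_compat_l; [lra | apply ln_le_sub_1; lra]).
  replace (A * ((1 - / A) - 1)) with (-1) in H by (field; lra).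
  lra.
Qed.

Lemma ex_least_nat (P : nat -> Prop) :
  (exists j, P j) -> exists j, P j /\ forall i, (i < j)%nat -> ~ P i.
Proof.
  intros [j Hj]. induction j as [j IH] using lt_wf_ind.
  destruct (classic (exists i, (i < j)%nat /\ P i)) as [[i [Hi Pi]] | Hnone].
  - exact (IH i Hi Pi).
  - exists j; split; [exact Hj |]. intros i Hi Pi; apply Hnone; eauto.
Qed.

Lemma card_below_S X n :
  card_below X (S n) = (card_below X n + if pbool (X n) then 1 else 0)%nat.
Proof.
  unfold card_below. rewrite seq_S, filter_app, length_app. simpl.
  destruct (pbool (X n)); simpl; lia.
Qed.

Lemma card_below_empty X n :
  (forall s, X s -> (s < n)%nat -> False) -> card_below X n = 0%nat.
Proof.
  induction n as [|n IH]; intros Hempty; [reflexivity |].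
  rewrite card_below_S, IH by (intros s Hs Hsn; apply (Hempty s Hs); lia).
  unfold pbool; destruct (excluded_middle_informative (X n)) as [Xn | _];
    [exfalso; apply (Hempty n Xn); lia | reflexivity].
Qed.

(* The factor [1 - 1/A] is written multiplied out to avoid a division. *)
Lemma card_below_le_log (X : nat -> Prop) A : 0 < A ->
  (forall s x, X s -> X x -> (s < x)%nat -> A * INR (S s) <= (A - 1) * INR (S x)) ->
  forall n r, 1 <= r -> (forall s, X s -> (s < n)%nat -> INR (S s) <= r) ->
  INR (card_below X n) <= 1 + A * ln r.
Proof.
  intros HA Hgap n. induction n as [|n IH]; intros r Hr Hbelow.
  all: assert (0 <= A * ln r)
         by (apply Rmult_le_pos; [lra | rewrite <- ln_1; apply ln_le; lra]).
  { unfold card_below; simpl; lra. }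
  rewrite card_below_S. unfold pbool.
  destruct (excluded_middle_informative (X n)) as [Xn | Xn];
    [| rewrite Nat.add_0_r; apply IH; auto].
  rewrite plus_INR; simpl (INR 1).
  destruct (classic (exists s, X s /\ (s < n)%nat)) as [[s0 [Xs0 Hs0]] | Hnone].
  2: { rewrite card_below_empty; [simpl; lra |]. intros s Xs Hs; apply Hnone; eauto. }
  set (r' := (1 - / A) * INR (S n)).
  assert (Hbelow' : forall s, X s -> (s < n)%nat -> INR (S s) <= r').
  { intros s Xs Hs. specialize (Hgap s n Xs Xn Hs). unfold r'.
    apply Rmult_le_reg_l with A; [lra |].
    replace (A * ((1 - / A) * INR (S n))) with ((A - 1) * INR (S n)) by (field; lra).
    lra. }
  assert (Hr' : 1 <= r').
  { specialize (Hbelow' s0 Xs0 Hs0). rewrite S_INR in Hbelow'.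
    pose proof (pos_INR s0); lra. }
  assert (HSn : 0 < INR (S n)) by apply lt_0_INR, Nat.lt_0_succ.
  pose proof (mul_ln_shrink A (INR (S n)) HA HSn ltac:(unfold r' in Hr'; lra)).
  assert (A * ln (INR (S n)) <= A * ln r)
    by (apply Rmult_le_compat_l; [lra | apply ln_le; [lra | apply Hbelow; auto]]).
  specialize (IH r' Hr' Hbelow'). unfold r' in IH. lra.
Qed.

Lemma appearance_bound_ge_1 {Sigma : Type} (w : nat -> Sigma) A :
  appearance_bound w A -> 1 <= A.
Proof.
  intros HA. destruct (HA 1%nat 0%nat (le_n 1)) as [p' [H _]].
  assert (INR 1 <= INR (p' + 1)) by (apply le_INR; lia). simpl in *. lra.
Qed.

Section Greedy.

Variable Sigma : Type.
Variable w : nat -> Sigma.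

Lemma string_attractor_mono (T T' : nat -> Prop) n :
  (forall t, T t -> T' t) -> string_attractor w T n -> string_attractor w T' n.
Proof.
  intros HT H p q Hpq Hq. destruct (H p q Hpq Hq) as [p' [Hend [Hocc [t [Ht Hpt]]]]].
  exists p'. split; [| split]; auto. exists t; auto.
Qed.

Lemma bad_antimono (T T' : nat -> Prop) j :
  (forall t, T t -> T' t) -> bad w T' j -> bad w T j.
Proof. intros HT Hbad HT'. apply Hbad; eapply string_attractor_mono; eauto. Qed.

Lemma string_attractor_of_not_bad (T : nat -> Prop) n :
  (forall i, (i < n)%nat -> ~ bad w T i) -> string_attractor w T n.
Proof.
  destruct n as [|j]; intros Hgood; [intros p q _ Hq; lia |].
  apply NNPP, Hgood; lia.
Qed.

Lemma least_bad_spec (T : nat -> Prop) : (exists j, bad w T j) ->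
  bad w T (least_bad w T) /\ forall i, (i < least_bad w T)%nat -> ~ bad w T i.
Proof. intros H. unfold least_bad. apply epsilon_spec, ex_least_nat, H. Qed.

Lemma least_bad_covered (T T' : nat -> Prop) j :
  (forall i, (i < j)%nat -> ~ bad w T i) ->
  (forall t, T t -> T' t) -> T' j ->
  forall i, (i <= j)%nat -> ~ bad w T' i.
Proof.
  intros Hmin HT Hj i Hi Hbad.
  destruct (Nat.lt_ge_cases i j) as [Hlt | Hge].
  { apply (Hmin i Hlt). eapply bad_antimono; eauto. }
  replace i with j in Hbad by lia. apply Hbad. intros p q Hpq Hq.
  destruct (Nat.lt_ge_cases q j) as [Hqj | Hqj].
  - destruct (string_attractor_of_not_bad T j Hmin p q Hpq Hqj)
      as [p' [Hend [Hocc [t [Ht Hpt]]]]].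
    exists p'. split; [lia | split; [auto |]]. exists t; auto.
  - exists p. split; [lia | split; [auto |]]. exists j. split; [auto | lia].
Qed.

Lemma bad_uncovered_factor (T : nat -> Prop) j : bad w T j ->
  exists p q, (p <= q <= j)%nat /\
    forall p', (p' + (q - p) <= j)%nat ->
      (forall k, (k <= q - p)%nat -> w (p' + k)%nat = w (p + k)%nat) ->
      forall t, T t -> (p' <= t <= p' + (q - p))%nat -> False.
Proof.
  intros Hbad. apply NNPP. intros Hnone. apply Hbad. intros p q Hpq Hq.
  apply NNPP. intros Hunc. apply Hnone. exists p, q. split; [lia |].
  intros p' Hend Hocc t Ht Hpt. apply Hunc.
  exists p'. split; [lia | split; [auto |]]. exists t; auto.
Qed.

Lemma least_bad_uncovered_suffix (T : nat -> Prop) j :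
  bad w T j -> (forall i, (i < j)%nat -> ~ bad w T i) ->
  exists p, (p <= j)%nat /\
    (forall p', (p' + (j - p) < j)%nat ->
       ~ forall k, (k <= j - p)%nat -> w (p' + k)%nat = w (p + k)%nat) /\
    (forall t, T t -> (p <= t <= j)%nat -> False).
Proof.
  intros Hbad Hmin.
  destruct (bad_uncovered_factor T j Hbad) as [p [q [Hpqj Hunc]]].
  (* An occurrence ending before [j] would be covered in the good prefix [w[0..j-1]]. *)
  assert (Hlate : forall p', (p' + (q - p) < j)%nat ->
            ~ forall k, (k <= q - p)%nat -> w (p' + k)%nat = w (p + k)%nat).
  { intros p' Hend Hocc.
    destruct (string_attractor_of_not_bad T j Hmin p' (p' + (q - p))%nat ltac:(lia) Hend)
      as [p'' [Hend' [Hocc' [t [Ht Hpt]]]]].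
    apply (Hunc p'' ltac:(lia)) with (t := t); [| auto | lia].
    intros k Hk. rewrite (Hocc' k ltac:(lia)). apply Hocc; lia. }
  assert (Hqj : q = j).
  { destruct (Nat.lt_ge_cases q j) as [Hlt | Hge]; [| lia].
    exfalso. apply (Hlate p); [lia | auto]. }
  subst q. exists p. split; [lia | split; [exact Hlate |]].
  intros t Ht Hpt. apply (Hunc p ltac:(lia) (fun k _ => eq_refl) t Ht). lia.
Qed.

Lemma least_bad_gap A (T : nat -> Prop) j : appearance_bound w A ->
  bad w T j -> (forall i, (i < j)%nat -> ~ bad w T i) ->
  exists p, (p <= j)%nat /\ INR (S j) <= A * INR (S j - p) /\
    (forall t, T t -> (p <= t <= j)%nat -> False).
Proof.
  intros HA Hbad Hmin.
  destruct (least_bad_uncovered_suffix T j Hbad Hmin) as [p [Hpj [Hlate Hfree]]].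
  destruct (HA (S (j - p)) p ltac:(lia)) as [p' [Happ Hocc]].
  assert (Hend : (j <= p' + (j - p))%nat).
  { destruct (Nat.lt_ge_cases (p' + (j - p)) j) as [Hlt | Hge]; [| exact Hge].
    exfalso. apply (Hlate p' Hlt). intros k Hk. apply Hocc. lia. }
  exists p. split; [exact Hpj | split; [| exact Hfree]].
  replace (S j - p)%nat with (S (j - p)) by lia.
  eapply Rle_trans; [| exact Happ]. apply le_INR. lia.
Qed.

Lemma greedy_stage_mono k k' x :
  (k <= k')%nat -> greedy_stage w k x -> greedy_stage w k' x.
Proof. induction 1; intros Hx; [exact Hx | left; auto]. Qed.

Lemma greedy_stage_not_bad k : forall t, greedy_stage w k t ->
  forall i, (i <= t)%nat -> ~ bad w (greedy_stage w k) i.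
Proof.
  induction k as [|k IH]; intros t Ht i Hi; [contradiction |].
  destruct Ht as [Ht | [Hex ->]].
  - intros Hbad. apply (IH t Ht i Hi). eapply bad_antimono; [| exact Hbad].
    intros x Hx; left; exact Hx.
  - apply (least_bad_covered (greedy_stage w k) _ (least_bad w (greedy_stage w k)));
      [apply (least_bad_spec _ Hex) | intros x Hx; left; exact Hx | right; auto | exact Hi].
Qed.

Lemma greedy_stage_lt_least_bad k t :
  greedy_stage w k t -> (exists j, bad w (greedy_stage w k) j) ->
  (t < least_bad w (greedy_stage w k))%nat.
Proof.
  intros Ht Hex. destruct (Nat.lt_ge_cases t (least_bad w (greedy_stage w k))) as [Hlt | Hge];
    [exact Hlt | exfalso].
  exact (greedy_stage_not_bad k t Ht _ Hge (proj1 (least_bad_spec _ Hex))).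
Qed.

Lemma greedy_attractor_added x : greedy_attractor w x ->
  exists k, (exists j, bad w (greedy_stage w k) j) /\ x = least_bad w (greedy_stage w k).
Proof.
  intros [m Hx]. induction m as [|m IH]; [contradiction |].
  destruct Hx as [Hx | Hadded]; [exact (IH Hx) | eauto].
Qed.

Lemma greedy_attractor_lt_in_stage s k :
  greedy_attractor w s -> (exists j, bad w (greedy_stage w k) j) ->
  (s < least_bad w (greedy_stage w k))%nat -> greedy_stage w k s.
Proof.
  intros Hs Hex Hlt.
  destruct (greedy_attractor_added s Hs) as [k' [Hex' Hs_eq]].
  destruct (Nat.lt_trichotomy k' k) as [Hk | [<- | Hk]].
  - apply (greedy_stage_mono (S k')); [lia |]. right; auto.
  - lia.
  - assert (Hx : greedy_stage w k' (least_bad w (greedy_stage w k)))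
      by (apply (greedy_stage_mono (S k)); [lia | right; auto]).
    pose proof (greedy_stage_lt_least_bad k' _ Hx Hex'). lia.
Qed.

Lemma greedy_attractor_gap A s x : appearance_bound w A ->
  greedy_attractor w s -> greedy_attractor w x -> (s < x)%nat ->
  A * INR (S s) <= (A - 1) * INR (S x).
Proof.
  intros HA Hs Hx Hsx.
  destruct (greedy_attractor_added x Hx) as [k [Hex Hx_eq]].
  rewrite Hx_eq in Hsx |- *.
  pose proof (greedy_attractor_lt_in_stage s k Hs Hex Hsx) as Hsk.
  destruct (least_bad_spec _ Hex) as [Hbad Hmin].
  destruct (least_bad_gap A _ _ HA Hbad Hmin) as [p [Hp [Happ Hfree]]].
  assert (Hsp : (S s <= p)%nat).
  { destruct (Nat.lt_ge_cases s p) as [Hlt | Hge]; [lia |].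
    exfalso. apply (Hfree s Hsk). lia. }
  apply le_INR in Hsp. rewrite minus_INR in Happ by lia.
  pose proof (appearance_bound_ge_1 w A HA). nra.
Qed.

Lemma greedy_stage_reaches_not_bad j : forall e k,
  (forall t, greedy_stage w k t -> (t < j)%nat) ->
  (forall i, (i + e < S j)%nat -> ~ bad w (greedy_stage w k) i) ->
  exists k', (forall t, greedy_stage w k' t -> (t <= j)%nat) /\
             ~ bad w (greedy_stage w k') j.
Proof.
  induction e as [|e IH]; intros k Hsub Hgood.
  { exists k. split; [intros t Ht; specialize (Hsub t Ht); lia | apply Hgood; lia]. }
  destruct (classic (bad w (greedy_stage w k) j)) as [Hbadj | Hgoodj].
  2: { exists k. split; [intros t Ht; specialize (Hsub t Ht); lia | exact Hgoodj]. }
  assert (Hex : exists i, bad w (greedy_stage w k) i) by eauto.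
  destruct (least_bad_spec _ Hex) as [Hbad Hmin].
  set (b := least_bad w (greedy_stage w k)) in *.
  assert (Hbj : (b <= j)%nat).
  { destruct (Nat.le_gt_cases b j) as [Hle | Hgt]; [exact Hle |].
    exfalso. exact (Hmin j Hgt Hbadj). }
  assert (Hbe : (j <= b + e)%nat).
  { destruct (Nat.le_gt_cases j (b + e)) as [Hle | Hgt]; [exact Hle |].
    exfalso. apply (Hgood b); [lia | exact Hbad]. }
  assert (Hsub' : forall t, greedy_stage w (S k) t -> (t <= b)%nat).
  { intros t [Ht | [_ ->]]; [| lia].
    pose proof (greedy_stage_lt_least_bad k t Ht Hex). lia. }
  assert (Hgood' : forall i, (i <= b)%nat -> ~ bad w (greedy_stage w (S k)) i)
    by (apply greedy_stage_not_bad; right; split; [exact Hex | reflexivity]).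
  destruct (Nat.eq_dec b j) as [Heq | Hne].
  - exists (S k). split.
    + intros t Ht. specialize (Hsub' t Ht). lia.
    + apply Hgood'. lia.
  - apply (IH (S k)).
    + intros t Ht. specialize (Hsub' t Ht). lia.
    + intros i Hi. apply Hgood'. lia.
Qed.

Lemma greedy_prefix_attractor n :
  string_attractor w (fun x => greedy_attractor w x /\ (x < n)%nat) n.
Proof.
  destruct n as [|j]; [intros p q _ Hq; lia |].
  destruct (greedy_stage_reaches_not_bad j (S j) 0) as [k [Hsub Hgood]].
  - contradiction.
  - lia.
  - apply NNPP in Hgood. eapply string_attractor_mono; [| exact Hgood].
    intros t Ht. split; [exists k; exact Ht | specialize (Hsub t Ht); lia].
Qed.

End Greedy.

Theorem theorem21 :
  exists K : R,
    forall (Sigma : Type) (w : nat -> Sigma) (A : R),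
      finite_alphabet Sigma ->
      appearance_constant w A ->
      forall n : nat,
        string_attractor w (fun x => greedy_attractor w x /\ (x < n)%nat) n /\
        ((2 <= n)%nat ->
          INR (card_below (greedy_attractor w) n) <= K * A * ln (INR n)).
Proof.
  exists 3. intros Sigma w A _ [HA _] n.
  split; [apply greedy_prefix_attractor | intros Hn].
  pose proof (appearance_bound_ge_1 w A HA) as HA1.
  assert (Hn2 : 2 <= INR n)
    by (replace 2 with (INR 2) by (simpl; lra); apply le_INR; exact Hn).
  assert (Hcard : INR (card_below (greedy_attractor w) n) <= 1 + A * ln (INR n)).
  { apply (card_below_le_log _ A); [lra | | lra |].
    - intros s x Hs Hx Hsx. exact (greedy_attractor_gap Sigma w A s x HA Hs Hx Hsx).
    - intros s _ Hs. apply le_INR. exact Hs. }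
  assert (ln 2 <= ln (INR n)) by (apply ln_le; lra).
  pose proof ln_lt_2.
  nra.
Qed.
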